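(* Let $(\mathcal{S},\mathcal{A},\tau,\mu_0,R,\gamma)$ be an MDP and let $\preceq^\xi_{\star,R}$ be the relation on possible initial trajectories given by $\xi_1\preceq^\xi_{\star,R}\xi_2\iff G_R(\xi_1)\le G_R(\xi_2)$. If $R'$ is obtained from $R$ by a finite sequence of transformations each of which is a $k$-initial potential shaping (for some $k\in\mathbb{R}$), a positive linear scaling, or a mask of unreachable transitions, then $\preceq^\xi_{\star,R'}=\preceq^\xi_{\star,R}$.
   Context: An MDP has finite $\mathcal{S},\mathcal{A}$, $\tau:\mathcal{S}\times\mathcal{A}\to\Delta(\mathcal{S})$, $\mu_0\in\Delta(\mathcal{S})$, $R:\mathcal{S}\times\mathcal{A}\times\mathcal{S}\to\mathbb{R}$, $\gamma\in(0,1)$. A transition $(s,a,s')$ is possible if $\tau(s'\mid s,a)>0$. A trajectory $\xi=(s_0,a_0,s_1,\dots)$ is possible if all its transitions are possible and initial if $\mu_0(s_0)>0$; $G(\xi)=\sum_{t\ge0}\gamma^tR(s_t,a_t,s_{t+1})$. A transition is reachable if it occurs in some possible initial trajectory; mask of unreachable transitions: $R'(x)=R(x)$ for all reachable $x$. Positive linear scaling: $R'=cR$, $c>0$. A state is initial if $\mu_0(s)>0$, terminal (for $R$) if $\tau(s\mid s,a)=1$ and $R(s,a,s)=0$ for all $a$. $k$-initial potential shaping: $R'(s,a,s')=R(s,a,s')+\gamma\Phi(s')-\Phi(s)$ with $\Phi:\mathcal{S}\to\mathbb{R}$, $\Phi=0$ on terminal states, $\Phi=k$ on initial states. *)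

From HB Require Import structures.
From mathcomp Require Import all_boot all_order all_algebra.
From mathcomp Require Import all_classical all_reals all_analysis.
From Stdlib Require Import Relations.
Set Implicit Arguments. Unset Strict Implicit. Unset Printing Implicit Defensive.
Import Order.TTheory GRing.Theory Num.Theory.
Local Open Scope ring_scope.

(* The environment part of an MDP (S, A, tau, mu0, gamma); the reward
   function is kept separate since the theorem transforms it. *)
Record mdp (R : realType) (S A : finType) := MDP {
  tau : S -> A -> S -> R;            (* tau s a s' = tau(s' | s, a) *)
  mu0 : S -> R;
  gamma : R;
  tau_ge0 : forall s a s', 0 <= tau s a s';
  tau_sum1 : forall s a, \sum_(s' : S) tau s a s' = 1;
  mu0_ge0 : forall s, 0 <= mu0 s;
  mu0_sum1 : \sum_(s : S) mu0 s = 1;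
  gamma_gt0 : 0 < gamma;
  gamma_lt1 : gamma < 1 }.

Definition reward (R : realType) (S A : finType) := S -> A -> S -> R.

Record traj (S A : Type) := Traj { st : nat -> S; act : nat -> A }.

Section Defs.
Context {R : realType} {S A : finType} (M : mdp R S A).

Definition possible_transition (s : S) (a : A) (s' : S) : Prop :=
  0 < tau M s a s'.

Definition possible_traj (xi : traj S A) : Prop :=
  forall t, possible_transition (st xi t) (act xi t) (st xi t.+1).

Definition initial_traj (xi : traj S A) : Prop := 0 < mu0 M (st xi 0).

Definition ret (Rw : reward R S A) (xi : traj S A) : R :=
  limn (fun n : nat =>
    \sum_(0 <= t < n) gamma M ^+ t * Rw (st xi t) (act xi t) (st xi t.+1)).

Definition reachable (s : S) (a : A) (s' : S) : Prop :=
  exists xi t, possible_traj xi /\ initial_traj xi /\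
    st xi t = s /\ act xi t = a /\ st xi t.+1 = s'.

Definition mask_unreachable (Rw Rw' : reward R S A) : Prop :=
  forall s a s', reachable s a s' -> Rw' s a s' = Rw s a s'.

Definition pos_scaling (Rw Rw' : reward R S A) : Prop :=
  exists c : R, 0 < c /\ forall s a s', Rw' s a s' = c * Rw s a s'.

Definition initial_state (s : S) : Prop := 0 < mu0 M s.

Definition terminal_state (Rw : reward R S A) (s : S) : Prop :=
  forall a, tau M s a s = 1 /\ Rw s a s = 0.

Definition k_initial_shaping (k : R) (Rw Rw' : reward R S A) : Prop :=
  exists Phi : S -> R,
    (forall s, terminal_state Rw s -> Phi s = 0) /\
    (forall s, initial_state s -> Phi s = k) /\
    (forall s a s', Rw' s a s' = Rw s a s' + gamma M * Phi s' - Phi s).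

Definition allowed_step (Rw Rw' : reward R S A) : Prop :=
  (exists k : R, k_initial_shaping k Rw Rw') \/
  pos_scaling Rw Rw' \/ mask_unreachable Rw Rw'.

Definition obtainable (Rw Rw' : reward R S A) : Prop :=
  clos_refl_trans_1n _ allowed_step Rw Rw'.

End Defs.

(* Each allowed transformation changes the return of every possible initial
   trajectory by a positive affine map G |-> c G + d with c, d independent of
   the trajectory: scaling by c multiplies it by c; masking does not touch any
   transition such a trajectory uses; and k-initial potential shaping
   telescopes to G - Phi(s_0) = G - k, because the boundary term
   gamma^n Phi(s_n) of the partial sums vanishes in the limit.  Positive
   affine maps compose and preserve the order of returns. *)
From HB Require Import structures.
From mathcomp Require Import all_boot all_order all_algebra.
From mathcomp Require Import all_classical all_reals all_analysis.
From Stdlib Require Import Relations.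
From mathcomp Require Import ring.
Import Order.TTheory GRing.Theory Num.Theory.
Import numFieldNormedType.Exports.
Local Open Scope ring_scope.

Section DiscountedSeries.
Context {R : realType} {g : R}.
Hypotheses (g_ge0 : 0 <= g) (g_lt1 : g < 1).

Lemma bounded_fin {T : finType} (f : T -> R) : exists B, forall x, `|f x| <= B.
Proof.
exists (\sum_x `|f x|) => x.
by rewrite (bigD1 x) //= lerDl sumr_ge0.
Qed.

Lemma is_cvg_discounted_series {h : nat -> R} {B : R} :
  (forall t, `|h t| <= B) -> cvgn (series (fun t => g ^+ t * h t)).
Proof.
move=> hB; apply: normed_cvg.
have B_ge0 : 0 <= B by apply: le_trans (hB 0%N).
apply: (@series_le_cvg _ _ (geometric B g)) => [n|n|n|] /=.
- exact: normr_ge0.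
- by rewrite mulr_ge0 // exprn_ge0.
- by rewrite normrM normrX ger0_norm // mulrC ler_wpM2r ?exprn_ge0.
- by apply: is_cvg_geometric_series; rewrite ger0_norm.
Qed.

Lemma discounted_cvg0 {h : nat -> R} {B : R} :
  (forall t, `|h t| <= B) -> ((fun t => g ^+ t * h t) @ \oo --> 0)%classic.
Proof. by move/is_cvg_discounted_series; apply: cvg_series_cvg_0. Qed.

End DiscountedSeries.

Section Returns.
Context {R : realType} {S A : finType} (M : mdp R S A).
Implicit Types (Rw : reward R S A) (xi : traj S A).

Definition disc_reward Rw xi (t : nat) : R :=
  gamma M ^+ t * Rw (st xi t) (act xi t) (st xi t.+1).

Lemma retE Rw xi : ret M Rw xi = limn (series (disc_reward Rw xi)).
Proof. by []. Qed.

Lemma gamma_ge0 : 0 <= gamma M.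
Proof. exact/ltW/gamma_gt0. Qed.

Lemma is_cvg_ret Rw xi : cvgn (series (disc_reward Rw xi)).
Proof.
have [B RwB] := bounded_fin (fun x : S * A * S => Rw x.1.1 x.1.2 x.2).
apply: (is_cvg_discounted_series gamma_ge0 (gamma_lt1 M)) => t.
exact: (RwB (_, _, _)).
Qed.

Lemma series_shaping {Rw Rw'} {Phi : S -> R} xi n :
  (forall s a s', Rw' s a s' = Rw s a s' + gamma M * Phi s' - Phi s) ->
  series (disc_reward Rw' xi) n =
  series (disc_reward Rw xi) n + gamma M ^+ n * Phi (st xi n) - Phi (st xi 0).
Proof.
move=> Rw'E; rewrite /series /=; elim: n => [|n IH].
  by rewrite !big_geq // expr0 mul1r addrK.
by rewrite !big_nat_recr //= IH /disc_reward Rw'E exprS; ring.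
Qed.

Lemma ret_shaping {k : R} {Rw Rw'} xi :
  k_initial_shaping M k Rw Rw' -> initial_traj M xi ->
  ret M Rw' xi = ret M Rw xi - k.
Proof.
move=> [Phi [_ [Phi_init Rw'E]]] xi_init.
have [B PhiB] := bounded_fin Phi.
have boundary0 := discounted_cvg0 gamma_ge0 (gamma_lt1 M)
  (fun t => PhiB (st xi t)).
rewrite !retE (funext (fun n => series_shaping xi n Rw'E)) -(Phi_init _ xi_init).
apply: cvg_lim => //; apply: cvgB (cvg_cst _).
by rewrite -[limn _]addr0; apply: cvgD; [exact: is_cvg_ret | exact: boundary0].
Qed.

Lemma ret_scaling {c : R} {Rw Rw'} xi :
  (forall s a s', Rw' s a s' = c * Rw s a s') ->
  ret M Rw' xi = c * ret M Rw xi.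
Proof.
move=> Rw'E; rewrite !retE.
have -> : series (disc_reward Rw' xi) = (fun n => c * series (disc_reward Rw xi) n).
  apply/funext => n; rewrite /series /= mulr_sumr.
  by apply: eq_bigr => t _; rewrite /disc_reward Rw'E mulrCA.
by apply: cvg_lim => //; apply: cvgMl_tmp; exact: is_cvg_ret.
Qed.

Lemma ret_mask {Rw Rw'} xi :
  mask_unreachable M Rw Rw' -> possible_traj M xi -> initial_traj M xi ->
  ret M Rw' xi = ret M Rw xi.
Proof.
move=> Rw'E xi_pos xi_init; rewrite !retE; congr (limn _).
apply/funext => n; apply: eq_bigr => t _.
by rewrite /disc_reward Rw'E //; exists xi, t.
Qed.

Definition ret_pos_affine Rw Rw' : Prop :=
  exists c d : R, 0 < c /\ forall xi, possible_traj M xi -> initial_traj M xi ->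
    ret M Rw' xi = c * ret M Rw xi + d.

Lemma allowed_step_ret_pos_affine {Rw Rw'} :
  allowed_step M Rw Rw' -> ret_pos_affine Rw Rw'.
Proof.
case=> [[k shaping] | [[c [c_gt0 Rw'E]] | mask]].
- by exists 1, (- k); split=> // xi _ xi_init; rewrite mul1r (ret_shaping xi shaping).
- by exists c, 0; split=> // xi _ _; rewrite addr0 (ret_scaling xi Rw'E).
- by exists 1, 0; split=> // xi *; rewrite mul1r addr0 (ret_mask xi mask).
Qed.

Lemma ret_pos_affine_refl Rw : ret_pos_affine Rw Rw.
Proof. by exists 1, 0; split=> // xi _ _; rewrite mul1r addr0. Qed.

Lemma ret_pos_affine_trans {Rw1 Rw2 Rw3} :
  ret_pos_affine Rw1 Rw2 -> ret_pos_affine Rw2 Rw3 -> ret_pos_affine Rw1 Rw3.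
Proof.
move=> [c1 [d1 [c1_gt0 E12]]] [c2 [d2 [c2_gt0 E23]]].
exists (c2 * c1), (c2 * d1 + d2); split; first exact: mulr_gt0.
by move=> xi xi_pos xi_init; rewrite E23 // E12 //; ring.
Qed.

Lemma obtainable_ret_pos_affine {Rw Rw'} :
  obtainable M Rw Rw' -> ret_pos_affine Rw Rw'.
Proof.
elim=> [Rw0 | Rw1 Rw2 Rw3 step _ IH]; first exact: ret_pos_affine_refl.
exact: ret_pos_affine_trans (allowed_step_ret_pos_affine step) IH.
Qed.

End Returns.

Theorem theorem3p14 (R : realType) (S A : finType) (M : mdp R S A)
    (Rw Rw' : reward R S A) :
  obtainable M Rw Rw' ->
  forall xi1 xi2 : traj S A,
    possible_traj M xi1 -> initial_traj M xi1 ->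
    possible_traj M xi2 -> initial_traj M xi2 ->
    (ret M Rw xi1 <= ret M Rw xi2 <-> ret M Rw' xi1 <= ret M Rw' xi2).
Proof.
move=> /obtainable_ret_pos_affine [c [d [c_gt0 Rw'E]]] xi1 xi2 p1 i1 p2 i2.
by rewrite !Rw'E // lerD2r ler_pM2l.
Qed.
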